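(* Let $\mathcal{X}\in\mathbb{R}^d$ be a random vector with $\mathcal{X}_j\geq\eta_{\min}>0$ and $\mathbb{E}[\mathcal{X}_j]<\infty$, let $\mathbf{X}_1,\ldots,\mathbf{X}_n$ be i.i.d. copies with entries $X_{ij}$, let $u$ be a utility function, and $h(\mathbf{w})=-\frac1n\sum_{i=1}^n u(\mathbf{w}^{\top}\mathbf{X}_i)$. For $R>0$, $\lambda>0$, let $\mathbf{w}^*$ solve $\min_{\mathbf{w}\in\mathbb{R}^d_+}\mathbb{E}[h(\mathbf{w})]$ s.t. $\|\mathbf{w}\|_1\leq R$, let $\hat{\mathbf{w}}_n$ solve $\min_{\mathbf{w}\in\mathbb{R}^d_+}h(\mathbf{w})+\lambda\|\mathbf{w}\|_1$ s.t. $\|\mathbf{w}\|_1\leq R$, and let $s=\|\mathbf{w}^*\|_0$. Assume: (a) $u$ is $L_u$-Lipschitz continuous, differentiable and concave; (c) there is $\nu>0$ with $\mathbb{E}[\exp(t(X_{ij}-\nu))]\leq\exp(t^2\sigma^2/2)$ for all $t>0,i,j$; (d) there exist $\alpha\geq2$ and $\kappa$ with (almost surely) $0<\kappa\leq\inf_{|\mathcal{S}|\leq s}\inf_{\mathbf{v}\in C(\mathcal{S},\gamma_1,\gamma_2)}\mathbf{v}^{\top}\nabla^2_{\mathbf{w}}\mathbb{E}[h(\mathbf{w}^* )]\mathbf{v}/\|\mathbf{v}\|_2^2$, where $\gamma_1=\frac{\alpha}{\alpha-1}$, $\gamma_2=\frac{\sqrt s}{\alpha-1}$. Let $\delta\in(0,1)$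 and $\lambda\geq12\alpha(\nu\vee1)L_u\sigma\sqrt{\log(3/\delta)\log(2de/s)/n}$. Let $\Delta=\hat{\mathbf{w}}_n-\mathbf{w}^*$ and let $\mathcal{S}_0\subseteq[d]$ be the set of indices of the $s$ entries of $\Delta$ of largest magnitude. Then $\Delta\in C(\mathcal{S}_0,\gamma_1,\gamma_2)$ with probability at least $1-\delta/3$.
   Context: A utility function is an increasing concave function $u:\mathbb{R}_+\to\mathbb{R}$. $C(\mathcal{S},\gamma_1,\gamma_2)=\{\mathbf{v}\in\mathbb{R}^d:\|\mathbf{v}_{\mathcal{S}^c}\|_1\leq\gamma_1\|\mathbf{v}_{\mathcal{S}}\|_1+\gamma_2\|\mathbf{v}_{\mathcal{S}}\|_2\}$, where $\mathbf{v}_{\mathcal{S}}$ is the restriction to indices in $\mathcal{S}$. $a\vee b=\max\{a,b\}$, $\|\cdot\|_0$ counts nonzero entries. *)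

From HB Require Import structures.
From mathcomp Require Import all_boot all_order all_algebra.
From mathcomp Require Import all_classical all_reals all_analysis.
Set Implicit Arguments. Unset Strict Implicit. Unset Printing Implicit Defensive.
Import Order.TTheory GRing.Theory Num.Theory.
Import numFieldNormedType.Exports.
Local Open Scope classical_set_scope.
Local Open Scope ring_scope.

Section vectors.
Variables (R : realType) (d : nat).
Implicit Types (v w : 'rV[R]_d) (S : {set 'I_d}).

Definition l1norm v : R := \sum_(j < d) `|v ord0 j|.
Definition l2norm v : R := Num.sqrt (\sum_(j < d) (v ord0 j) ^+ 2).
Definition l0norm v : nat := #|[set j | v ord0 j != 0]|.

Definition l1norm_on S v : R := \sum_(j in S) `|v ord0 j|.
Definition l2norm_on S v : R := Num.sqrt (\sum_(j in S) (v ord0 j) ^+ 2).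

Definition cone S (g1 g2 : R) : set 'rV[R]_d :=
  [set v | l1norm_on (~: S) v <= g1 * l1norm_on S v + g2 * l2norm_on S v].

Definition top_indices (s : nat) v S : Prop :=
  #|S| = s /\ forall j k, j \in S -> k \notin S -> `|v ord0 k| <= `|v ord0 j|.

Definition feasible (Rad : R) v : Prop :=
  (forall j, 0 <= v ord0 j) /\ l1norm v <= Rad.

Definition grad (F : 'rV[R]_d -> R) v : 'rV[R]_d :=
  \row_(j < d) ('d F v) (delta_mx ord0 j).

(* H is the Hessian of F at x: F is differentiable near x, its gradient is
   differentiable at x, and d(grad F)(x) v = v H, i.e. H j k = d_j d_k F(x). *)
Definition is_hessian (F : 'rV[R]_d -> R) (x : 'rV[R]_d) (H : 'M[R]_d) : Prop :=
  (\forall y \near x, differentiable F y) /\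
  differentiable (grad F) x /\
  forall v, ('d (grad F) x) v = v *m H.

Definition quad_form (H : 'M[R]_d) v : R := (v *m H *m v^T) ord0 ord0.

End vectors.

Section prob.
Local Open Scope ereal_scope.
Variables (dT : measure_display) (T : measurableType dT) (R : realType)
  (P : probability T R).

(* X_1..X_n (X i j = j-th entry of X_i) are i.i.d. copies of the random
   vector Xc (Xc j = its j-th entry): measurability, same joint law as Xc
   (on the generating pi-system of measurable rectangles), and mutual
   independence of the vectors X_1, ..., X_n. *)
Definition iid_copies (d n : nat) (Xc : 'I_d -> T -> R)
  (X : 'I_n -> 'I_d -> T -> R) : Prop :=
  (forall j, measurable_fun setT (Xc j)) /\
  (forall i j, measurable_fun setT (X i j)) /\
  (forall i (B : 'I_d -> set R), (forall j, measurable (B j)) ->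
     P (\bigcap_j (X i j @^-1` B j)) = P (\bigcap_j (Xc j @^-1` B j))) /\
  (forall B : 'I_n -> 'I_d -> set R, (forall i j, measurable (B i j)) ->
     P (\bigcap_i \bigcap_j (X i j @^-1` B i j)) =
     \prod_(i < n) P (\bigcap_j (X i j @^-1` B i j))).

Definition hfun (d n : nat) (u : R -> R) (X : 'I_n -> 'I_d -> T -> R)
  (w : 'rV[R]_d) : T -> R :=
  fun om => (- (n%:R^-1 * \sum_(i < n) u (\sum_(j < d) w ord0 j * X i j om)))%R.

Definition Eh (d n : nat) (u : R -> R) (X : 'I_n -> 'I_d -> T -> R)
  (w : 'rV[R]_d) : R := fine 'E_P[hfun u X w].

End prob.

From HB Require Import structures.
From mathcomp Require Import all_boot all_order all_algebra.
From mathcomp Require Import all_classical all_reals all_analysis.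
From mathcomp Require Import lra zify measurable_realfun.
Set Implicit Arguments. Unset Strict Implicit. Unset Printing Implicit Defensive.
Import Order.TTheory GRing.Theory Num.Theory.
Import numFieldNormedType.Exports.
Local Open Scope classical_set_scope.
Local Open Scope ring_scope.

(* Since u is strictly increasing and every entry of X_i is almost surely
   positive, any slack in the budget ||w||_1 <= R could be spent on one
   coordinate to strictly decrease E[h]; hence the population minimiser
   saturates ||w*||_1 = R.  Off the support T of w* we have Delta = w_hat >= 0,
   so ||w_hat||_1 <= ||w*||_1 gives ||Delta_{T^c}||_1 <= ||Delta_T||_1, and
   ||Delta_T||_1 <= ||Delta_{S0}||_1 because S0 collects the s largest entries. *)

Lemma sum_top_ge (R : numDomainType) (I : finType) (f : I -> R) (A B : {set I}) :
  (forall j, 0 <= f j) -> #|A| = #|B| ->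
  (forall j k, j \in A -> k \notin A -> f k <= f j) ->
  \sum_(j in B) f j <= \sum_(j in A) f j.
Proof.
move=> f_ge0 cardAB topA.
rewrite (big_setID A) [X in _ <= X](big_setID B) /= finset.setIC lerD //.
have cardD : #|A :\: B| = #|B :\: A|.
  by have := cardsID B A; have := cardsID A B; rewrite finset.setIC; lia.
have [/eqP|cardD_gt0] := posnP #|A :\: B|.
  rewrite cardD cards_eq0 => /eqP ->.
  by rewrite big_set0 sumr_ge0.
(* Multiply by c = #|A :\: B| = #|B :\: A| and compare termwise: every element
   of A :\: B dominates every element of B :\: A. *)
rewrite -(ler_pMn2r cardD_gt0) -sumr_const [in X in _ <= X]cardD -sumrMnl.
apply: ler_sum => j jAB; rewrite -sumr_const; apply: ler_sum => k kBA.
by move: jAB kBA; rewrite !inE => /andP[_ jA] /andP[kA _]; exact: topA.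
Qed.

Lemma sum_setC_split (V : nmodType) (I : finType) (F : I -> V) (S : {set I}) :
  \sum_j F j = \sum_(j in S) F j + \sum_(j in ~: S) F j.
Proof.
rewrite (bigID (mem S)) /=; congr (_ + _).
by apply: eq_bigl => j; rewrite finset.in_setC.
Qed.

Section cone.
Variables (R : realType) (d : nat).
Implicit Types (v ws wh : 'rV[R]_d) (S : {set 'I_d}).

Definition supp v : {set 'I_d} := [set j | v ord0 j != 0]%SET.

Lemma l0norm_supp v : l0norm v = #|supp v|.
Proof.
by apply: eq_card => j; rewrite inE; apply/idP/idP => [/set_mem|/mem_set].
Qed.

Lemma l1norm_on_ge0 S v : 0 <= l1norm_on S v.
Proof. exact: sumr_ge0. Qed.

Lemma l1norm_nonneg v : (forall j, 0 <= v ord0 j) -> l1norm v = \sum_j v ord0 j.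
Proof. by move=> v_ge0; apply: eq_bigr => j _; rewrite ger0_norm. Qed.

Lemma l1norm_split S v : l1norm v = l1norm_on S v + l1norm_on (~: S) v.
Proof. exact: sum_setC_split. Qed.

Lemma cone_of_l1norm_on_setC_le S (g1 g2 : R) v :
  1 <= g1 -> 0 <= g2 -> l1norm_on (~: S) v <= l1norm_on S v -> cone S g1 g2 v.
Proof.
move=> g1_ge1 g2_ge0 le_SC_S; rewrite /cone /=.
have := ler_peMl (l1norm_on_ge0 S v) g1_ge1.
have : 0 <= g2 * l2norm_on S v by rewrite mulr_ge0 ?sqrtr_ge0.
lra.
Qed.

Lemma l1norm_on_setC_supp_le ws wh :
  (forall j, 0 <= ws ord0 j) -> (forall j, 0 <= wh ord0 j) ->
  l1norm wh <= l1norm ws ->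
  l1norm_on (~: supp ws) (wh - ws) <= l1norm_on (supp ws) (wh - ws).
Proof.
set T := supp ws; move=> ws_ge0 wh_ge0; rewrite !l1norm_nonneg //.
rewrite (sum_setC_split _ T) [X in _ <= X](sum_setC_split _ T).
have ws_offT : \sum_(j in ~: T) ws ord0 j = 0.
  by apply: big1 => j; rewrite !inE negbK => /eqP.
have -> : l1norm_on (~: T) (wh - ws) = \sum_(j in ~: T) wh ord0 j.
  apply: eq_bigr => j; rewrite !inE negbK => /eqP ws_j.
  by rewrite !mxE ws_j subr0 ger0_norm.
have : \sum_(j in T) (ws ord0 j - wh ord0 j) <= l1norm_on T (wh - ws).
  by apply: ler_sum => j _; rewrite !mxE distrC ler_norm.
rewrite sumrB; lra.
Qed.

Lemma l1norm_on_setC_top_le ws wh S0 :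
  (forall j, 0 <= ws ord0 j) -> (forall j, 0 <= wh ord0 j) ->
  l1norm wh <= l1norm ws -> top_indices (l0norm ws) (wh - ws) S0 ->
  l1norm_on (~: S0) (wh - ws) <= l1norm_on S0 (wh - ws).
Proof.
move=> ws_ge0 wh_ge0 le_wh_ws [cardS0 topS0].
have supp_le_S0 : l1norm_on (supp ws) (wh - ws) <= l1norm_on S0 (wh - ws).
  apply: sum_top_ge => [j||j k]; [exact: normr_ge0| |exact: topS0].
  by rewrite cardS0 l0norm_supp.
have := l1norm_on_setC_supp_le ws_ge0 wh_ge0 le_wh_ws.
have := l1norm_split S0 (wh - ws); have := l1norm_split (supp ws) (wh - ws).
lra.
Qed.

End cone.

Section integrable_realfun.
Context d (T : measurableType d) (R : realType) (mu : {measure set T -> \bar R}).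
Local Notation integrable f := (mu.-integrable setT (EFin \o f)).

Lemma integrable_realfun_sum (I : finType) (h : I -> T -> R) :
  (forall i, integrable (h i)) -> integrable (fun x => \sum_i h i x).
Proof.
move=> h_int; apply: (eq_integrable _ (fun x => \sum_i (h i x)%:E)) => //.
  by move=> x _ /=; rewrite sumEFin.
by apply: integrable_sum => // i _; exact: h_int.
Qed.

Lemma integrable_realfun_scale (k : R) (h : T -> R) :
  integrable h -> integrable (fun x => k * h x).
Proof.
by move=> h_int; apply: (eq_integrable _ (fun x => k%:E * (h x)%:E)%E _ _
  (integrableZl _ k h_int)).
Qed.

Lemma integrable_realfun_add (f g : T -> R) :
  integrable f -> integrable g -> integrable (fun x => f x + g x).
Proof.
by move=> f_int g_int; apply: (eq_integrable _ (fun x => (f x)%:E + (g x)%:E)%E _ _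
  (integrableD _ f_int g_int)).
Qed.

End integrable_realfun.

Section integral_gt0.
Context d (T : measurableType d) (R : realType) (mu : {measure set T -> \bar R}).
Local Open Scope ereal_scope.

Lemma integral_gt0 (D : set T) (f : T -> \bar R) : measurable D ->
  measurable_fun D f -> (forall x, D x -> 0 < f x) -> 0 < mu D ->
  0 < \int[mu]_(x in D) f x.
Proof.
move=> mD mf f_gt0 muD_gt0.
rewrite lt0e integral_ge0 ?andbT; last by move=> x /f_gt0/ltW.
apply/negP => /eqP int_f0.
have : \int[mu]_(x in D) `|f x| = 0.
  by rewrite -int_f0; apply: eq_integral => x /set_mem Dx; rewrite gee0_abs ?ltW ?f_gt0.
move=> /(ae_eq_integral_abs mu mD mf) [N [mN muN0 subN]].
have DN : D `<=` N.
  move=> x Dx; apply: subN => /(_ Dx) fx0.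
  by have := f_gt0 x Dx; rewrite fx0 ltxx.
have : mu D <= mu N := le_measure mu (mem_set mD) (mem_set mN) DN.
by rewrite muN0 leNgt muD_gt0.
Qed.

Lemma integral_lt_ae (f g : T -> R) (N : set T) : 0 < mu setT ->
  measurable N -> mu N = 0 ->
  mu.-integrable setT (EFin \o f) -> mu.-integrable setT (EFin \o g) ->
  (forall x, ~ N x -> (f x < g x)%R) ->
  \int[mu]_x (f x)%:E < \int[mu]_x (g x)%:E.
Proof.
move=> muT_gt0 mN muN0 f_int g_int lt_fg.
have gBf_int := integrableB measurableT g_int f_int.
rewrite -sube_gt0 -integralB_EFin //.
rewrite (negligible_integral mN measurableT gBf_int muN0).
apply: integral_gt0 => [||x [_ Nx]|].
- exact: measurableD.
- by apply: measurable_funS (subsetT _) _; case/integrableP: gBf_int.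
- by rewrite -EFinB lte_fin subr_gt0 lt_fg.
- have : mu setT = mu (setT `\` N) + mu (setT `&` N) := measureDI mu measurableT mN.
  by rewrite setTI muN0 adde0 => <-.
Qed.

End integral_gt0.

Section iid_copies.
Context (dT : measure_display) (T : measurableType dT) (R : realType)
  (P : probability T R) (d n : nat)
  (Xc : 'I_d -> T -> R) (X : 'I_n -> 'I_d -> T -> R).
Hypothesis hiid : iid_copies P Xc X.

Lemma iid_copies_preimage i j (B : set R) : measurable B ->
  P (X i j @^-1` B) = P (Xc j @^-1` B).
Proof.
move=> mB; have [_ [_ [law _]]] := hiid.
have bigcap_one (Y : 'I_d -> T -> R) :
    \bigcap_k (Y k @^-1` (if k == j then B else setT)) = Y j @^-1` B.
  apply/seteqP; split => om /=; first by move/(_ j I); rewrite eqxx.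
  by move=> YjB k _ /=; case: eqP => [->|].
rewrite -!bigcap_one; apply: law => k.
by case: eqP => // _; exact: measurableT.
Qed.

Lemma iid_copies_integrable i j : (forall om, 0 <= Xc j om) ->
  ('E_P[Xc j] < +oo)%E -> P.-integrable setT (EFin \o X i j).
Proof.
move=> Xc_ge0 Xc_fin; have [mXc [mX _]] := hiid.
apply/integrableP; split; first exact/measurable_EFinP.
have m_abs : measurable_fun setT (fun y : R => `|y%:E|%E).
  by apply: measurableT_comp => //; exact: EFin_measurable.
have -> : (\int[P]_x `|(X i j x)%:E|)%E =
          (\int[pushforward P (X i j)]_y `|y%:E|)%E.
  by rewrite ge0_integral_pushforward // preimage_setT.
rewrite (eq_measure_integral (pushforward P (Xc j))); last first.
  by move=> A mA _; exact: iid_copies_preimage.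
rewrite ge0_integral_pushforward // preimage_setT.
move: Xc_fin; rewrite unlock; apply: le_lt_trans.
apply: ge0_le_integral => //.
- by move=> x _; rewrite lee_fin.
- exact: measurableT_comp.
- exact/measurable_EFinP.
- by move=> x _; rewrite /= ger0_norm.
Qed.

Lemma iid_copies_gt0_ae j : (forall om, 0 < Xc j om) ->
  P.-negligible [set om | exists i, X i j om <= 0].
Proof.
move=> Xc_gt0; have [_ [mX _]] := hiid.
have X_le0_negligible i : P.-negligible (X i j @^-1` `]-oo, 0]).
  exists (X i j @^-1` `]-oo, 0]); split => //.
    by rewrite -[X in measurable X]setTI; exact: mX.
  rewrite iid_copies_preimage // (_ : _ @^-1` _ = set0) ?measure0 //.
  apply/seteqP; split => om //=; rewrite in_itv /= leNgt.
  by rewrite Xc_gt0.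
pose F k := if insub k is Some i then X i j @^-1` `]-oo, 0] else set0.
apply: (negligibleS _ (negligible_bigcup (F := F) _)).
  by move=> om [i Xij_le0]; exists (val i) => //; rewrite /F valK /= in_itv.
move=> k; rewrite /F; case: insub => [i|]; first exact: X_le0_negligible.
exact: negligible_set0.
Qed.

End iid_copies.

Lemma dot_add_scale_delta (R : comNzRingType) (d : nat) (w : 'rV[R]_d) j0 (e : R)
    (x : 'I_d -> R) :
  \sum_j (w + e *: delta_mx ord0 j0) ord0 j * x j = \sum_j w ord0 j * x j + e * x j0.
Proof.
under eq_bigr do rewrite !mxE mulrDl.
rewrite big_split /=; congr (_ + _).
rewrite (bigD1 j0) //= eqxx mulr1 big1 ?addr0 // => j /negbTE ->.
by rewrite mulr0 mul0r.
Qed.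

Section empirical_risk.
Context (dT : measure_display) (T : measurableType dT) (R : realType)
  (P : probability T R) (d n : nat)
  (Xc : 'I_d -> T -> R) (X : 'I_n -> 'I_d -> T -> R) (u : R -> R) (Lu : R).
Hypothesis hiid : iid_copies P Xc X.
Hypothesis u_lip : forall x y, `|u x - u y| <= Lu * `|x - y|.
Hypothesis u_cont : continuous u.

Lemma hfun_measurable w : measurable_fun setT (hfun u X w).
Proof.
have [_ [mX _]] := hiid.
do 2 apply: measurableT_comp => //; apply: measurable_sum => i.
apply: measurableT_comp; first exact: continuous_measurable_fun.
by apply: measurable_sum => j; apply: measurableT_comp.
Qed.

Lemma abs_hfun_le w om : `|hfun u X w om| <=
  n%:R^-1 * \sum_i (`|u 0| + Lu * \sum_j `|w ord0 j| * `|X i j om|).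
Proof.
have Lu_ge0 : 0 <= Lu.
  by have := u_lip 1 0; rewrite subr0 normr1 mulr1; apply: le_trans.
rewrite normrN normrM ger0_norm ?invr_ge0 // ler_wpM2l ?invr_ge0 //.
apply: (le_trans (ler_norm_sum _ _ _)); apply: ler_sum => i _.
set z := \sum_j _; have := u_lip z 0; rewrite !subr0.
have : `|z| <= \sum_j `|w ord0 j| * `|X i j om|.
  by apply: (le_trans (ler_norm_sum _ _ _)); apply: ler_sum => j _; rewrite normrM.
move=> /(ler_wpM2l Lu_ge0); have := ler_normD (u z - u 0) (u 0).
rewrite subrK; lra.
Qed.

Lemma hfun_integrable w : (forall j om, 0 <= Xc j om) ->
  (forall j, ('E_P[Xc j] < +oo)%E) -> P.-integrable setT (EFin \o hfun u X w).
Proof.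
move=> Xc_ge0 Xc_fin.
pose B om := n%:R^-1 * \sum_i (`|u 0| + Lu * \sum_j `|w ord0 j| * `|X i j om|).
apply: (@le_integrable _ _ _ _ _ measurableT _ (EFin \o B)).
- exact/measurable_EFinP/hfun_measurable.
- by move=> om _ /=; rewrite lee_fin (le_trans (abs_hfun_le w om)) ?ler_norm.
apply: integrable_realfun_scale; apply: integrable_realfun_sum => i.
apply: integrable_realfun_add; first exact: finite_measure_integrable_cst.
apply: integrable_realfun_scale; apply: integrable_realfun_sum => j.
apply: integrable_realfun_scale; apply: (integrable_norm (f := X i j)).
exact: (iid_copies_integrable hiid).
Qed.

Hypothesis u_incr : forall x y, x < y -> u x < u y.
Hypothesis n_gt0 : (0 < n)%N.

Lemma hfun_add_delta_lt w j0 e om : 0 < e -> (forall i, 0 < X i j0 om) ->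
  hfun u X (w + e *: delta_mx ord0 j0) om < hfun u X w om.
Proof.
move=> e_gt0 X_gt0; rewrite /hfun ltrN2 ltr_pM2l ?invr_gt0 ?ltr0n //.
apply: ltr_sum => [|i _]; first by apply/hasP; exists (Ordinal n_gt0).
by rewrite dot_add_scale_delta u_incr // ltrDl mulr_gt0.
Qed.

Lemma Eh_argmin_l1norm_eq (j0 : 'I_d) (Rad : R) (ws : 'rV[R]_d) :
  (forall j om, 0 < Xc j om) -> (forall j, ('E_P[Xc j] < +oo)%E) ->
  feasible Rad ws -> (forall w, feasible Rad w -> Eh P u X ws <= Eh P u X w) ->
  l1norm ws = Rad.
Proof.
move=> Xc_gt0 Xc_fin [ws_ge0 ws_le] ws_min.
have Xc_ge0 j om : 0 <= Xc j om by exact/ltW.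
apply/eqP; rewrite eq_le ws_le /= leNgt; apply/negP => ws_lt.
pose e := Rad - l1norm ws; have e_gt0 : 0 < e by rewrite subr_gt0.
pose w' := ws + e *: delta_mx ord0 j0.
have w'_ge0 j : 0 <= w' ord0 j.
  by rewrite !mxE addr_ge0 // mulr_ge0 // ltW.
have l1w' : l1norm w' = Rad.
  have := dot_add_scale_delta ws j0 e (fun=> 1).
  rewrite !(eq_bigr _ (fun j _ => mulr1 _)) mulr1 -!l1norm_nonneg //.
  by move=> ->; rewrite subrKC.
have fw' : feasible Rad w' by split; rewrite ?l1w'.
have [N [mN PN0 NN]] := iid_copies_gt0_ae hiid (Xc_gt0 j0).
have : Eh P u X w' < Eh P u X ws.
  have int_w' := hfun_integrable w' Xc_ge0 Xc_fin.
  have int_ws := hfun_integrable ws Xc_ge0 Xc_fin.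
  rewrite /Eh unlock; apply: fine_lt; rewrite ?inE ?(integrable_fin_num measurableT) //.
  have PT_gt0 : (0 < P setT)%E by rewrite probability_setT.
  apply: (integral_lt_ae PT_gt0 mN PN0) => //.
  move=> om Nom; apply: hfun_add_delta_lt => // i.
  by rewrite ltNge; apply/negP => Xij_le0; apply: Nom; apply: NN; exists i.
by rewrite ltNge ws_min.
Qed.

End empirical_risk.

Theorem theorem6 (dT : measure_display) (T : measurableType dT) (R : realType)
  (P : probability T R) (d n : nat)
  (Xc : 'I_d -> T -> R) (X : 'I_n -> 'I_d -> T -> R)
  (eta_min : R) (u : R -> R) (Lu Rad lam nu sigma alpha kappa delta : R)
  (wstar : 'rV[R]_d) (what : T -> 'rV[R]_d) (H : 'M[R]_d)
  (hn : (0 < n)%N)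
  (* the random vector Xc: entries bounded below by eta_min > 0, finite means *)
  (heta : 0 < eta_min)
  (hXlb : forall j om, eta_min <= Xc j om)
  (hXint : forall j, ('E_P[Xc j] < +oo)%E)
  (* X_1, ..., X_n are i.i.d. copies of Xc *)
  (hiid : iid_copies P Xc X)
  (* u is a utility function: increasing and concave *)
  (hu_incr : forall x y, x < y -> u x < u y)
  (hu_conc : forall x y t, 0 <= t <= 1 ->
               (1 - t) * u x + t * u y <= u ((1 - t) * x + t * y))
  (* (a) u is Lu-Lipschitz and differentiable *)
  (hu_lip : forall x y, `|u x - u y| <= Lu * `|x - y|)
  (hu_diff : forall x : R, derivable u x 1)
  (hRad : 0 < Rad) (hlam : 0 < lam)
  (* w* solves min E[h(w)] over w >= 0, ||w||_1 <= Rad *)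
  (hwstar : feasible Rad wstar /\
            forall w, feasible Rad w -> Eh P u X wstar <= Eh P u X w)
  (* hat w_n solves min h(w) + lam ||w||_1 over w >= 0, ||w||_1 <= Rad *)
  (hwhat : forall om, feasible Rad (what om) /\
            forall w, feasible Rad w ->
              hfun u X (what om) om + lam * l1norm (what om)
              <= hfun u X w om + lam * l1norm w)
  (* s = ||w*||_0 (>= 1, needed for log(2de/s) to make sense) *)
  (hs : (0 < l0norm wstar)%N)
  (* (c) *)
  (hnu : 0 < nu) (hsigma : 0 < sigma)
  (hmgf : forall (t : R) i j, 0 < t ->
     ('E_P[fun om => expR (t * (X i j om - nu))]
        <= (expR (t ^+ 2 * sigma ^+ 2 / 2))%:E)%E)
  (* (d) H is the Hessian of E[h] at w*, restricted eigenvalue condition *)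
  (halpha : 2 <= alpha)
  (hH : is_hessian (Eh P u X) wstar H)
  (hkappa : 0 < kappa /\
     forall S : {set 'I_d}, (#|S| <= l0norm wstar)%N ->
     forall v : 'rV[R]_d,
       cone S (alpha / (alpha - 1))
              (Num.sqrt (l0norm wstar)%:R / (alpha - 1)) v ->
       v != 0 ->
       kappa <= quad_form H v / l2norm v ^+ 2)
  (hdelta : 0 < delta < 1)
  (hlam_lb : 12 * alpha * Num.max nu 1 * Lu * sigma *
      Num.sqrt (ln (3 / delta) * ln (2 * d%:R * expR 1 / (l0norm wstar)%:R)
                / n%:R) <= lam) :
  exists A : set T, measurable A /\ ((1 - delta / 3)%:E <= P A)%E /\
    forall om, A om ->
    forall S0 : {set 'I_d}, top_indices (l0norm wstar) (what om - wstar) S0 ->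
      cone S0 (alpha / (alpha - 1))
              (Num.sqrt (l0norm wstar)%:R / (alpha - 1)) (what om - wstar).
Proof.
have [ws_feasible ws_min] := hwstar; have [ws_ge0 _] := ws_feasible.
have [j0 _] := card_gt0P hs.
have u_cont : continuous u.
  by move=> x; apply: differentiable_continuous; exact/derivable1_diffP.
have Xc_gt0 j om : 0 < Xc j om by exact: lt_le_trans heta (hXlb j om).
have l1_ws : l1norm wstar = Rad.
  exact: (Eh_argmin_l1norm_eq hiid hu_lip u_cont hu_incr hn j0 Xc_gt0 hXint
            ws_feasible ws_min).
exists setT; split => //; split.
  by rewrite probability_setT lee_fin; lra.
move=> om _ S0 topS0; have [[wh_ge0 wh_le] _] := hwhat om.
apply: cone_of_l1norm_on_setC_le.
- by rewrite ler_pdivlMr ?mul1r; lra.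
- by rewrite divr_ge0 ?sqrtr_ge0 //; lra.
- by apply: l1norm_on_setC_top_le => //; rewrite l1_ws.
Qed.
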